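(* Let $e\ge 4$. The number of sparse colourings of the triangle $\triangle_{2,e-1}$ (a triangle of height $e-4$) equals the Catalan number $C_{e-3}=\frac{1}{e-2}\binom{2(e-3)}{e-3}$.
   Context: Dots are pairs of integers $(\alpha,\beta)$. For integers $\delta<\varepsilon$, the triangle $\triangle_{\delta,\varepsilon}$ is the set of dots $(\alpha,\beta)$ with $\delta\le\alpha$, $\beta\le\varepsilon$ and $\beta-\alpha\ge 2$; its height is $\varepsilon-\delta-1$. For a dot $(\alpha,\beta)\in\triangle_{\delta,\varepsilon}$, the sub-triangle $\triangle_{\alpha,\beta}$ is defined by the same rule. A colouring assigns to each dot the colour black or white. A coloured triangle $\triangle_{\delta,\varepsilon}$ is sparse if for every dot $(\alpha,\beta)\in\triangle_{\delta,\varepsilon}$ (including the vertex $(\delta,\varepsilon)$) the number of black dots in $\triangle_{\alpha,\beta}$ is at most $\beta-\alpha-1$, with equality if and only if $(\alpha,\beta)$ is black. (For $e=4$ the triangle is empty and has exactly one colouring.) *)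

From mathcomp Require Import all_boot.
Set Implicit Arguments. Unset Strict Implicit. Unset Printing Implicit Defensive.

(* Dots are pairs of naturals (a, b) (all indices here are >= 2, so nat suffices).
   Dot (a,b) lies in triangle △_{d,f} iff d <= a, b <= f, b - a >= 2. *)
Definition in_tri (d f a b : nat) : bool := (d <= a) && (b <= f) && (a + 2 <= b).

(* A colouring of △_{2,e-1} is represented by c : {ffun 'I_e * 'I_e -> bool}
   (true = black) which is false at every pair outside the triangle; all dots
   of △_{2,e-1} have coordinates < e. *)
Definition colouring (e : nat) := {ffun 'I_e * 'I_e -> bool}.

Definition supported (e : nat) (c : colouring e) : bool :=
  [forall x : 'I_e * 'I_e, ~~ in_tri 2 e.-1 x.1 x.2 ==> ~~ c x].

Definition nblack (e : nat) (c : colouring e) (a b : nat) : nat :=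
  #|[set x : 'I_e * 'I_e | in_tri a b x.1 x.2 && c x]|.

Definition sparse (e : nat) (c : colouring e) : bool :=
  [forall x : 'I_e * 'I_e, in_tri 2 e.-1 x.1 x.2 ==>
     (nblack c x.1 x.2 <= x.2 - x.1 - 1) &&
     ((nblack c x.1 x.2 == x.2 - x.1 - 1) == c x)].

From mathcomp Require Import all_boot zify.
Set Implicit Arguments. Unset Strict Implicit. Unset Printing Implicit Defensive.

(* A colouring is read as a relation [black c i j] on nat, and the triangle is built
   column by column: column j consists of the dots (i, j) with 2 <= i <= j - 2.  When a
   column j = f + 1 is added, the sparseness conditions at its dots only see the old
   columns through the slack (f - a - 1) - #black(△_{a,f}) of each row a, and say
   that, read from the bottom, a cell is black exactly when the number of black cells
   of the column at or above it equals slack + 1.  Section Column studies such columns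
   abstractly: a column is determined by its number of black cells (column_unique) and
   every admissible number is realised (column_exists).  Consequently restriction to
   the old columns is a bijection from the sparse colourings of size f + 2 with [m]
   black dots onto the sparse colourings of size f + 1 with at most [m] black dots
   (card_weight_step).  Hence the number of sparse colourings of △_{2,n+3} with [m]
   black dots is the ballot number [ballot n m] (count_by_weight); these satisfy
   ballot n k = C(n+k, k) - C(n+k, k-1) (ballot_closed), and summing over [m] gives
   ballot (n+1) (n+1), the Catalan number C_{n+1} (catalan_ballot). *)

(* A column is a bit [x a] for each cell a < hi; [above x a] counts the black cells
   of the column at or above cell a. *)
Section Column.
Variable hi : nat.

Definition above (x : nat -> bool) (a : nat) : nat := \sum_(a <= i < hi) x i.

Lemma above_top x a : hi <= a -> above x a = 0.
Proof. by move=> h; rewrite /above big_geq. Qed.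

Lemma aboveS x a : a < hi -> above x a = x a + above x a.+1.
Proof. by move=> h; rewrite /above big_ltn. Qed.

Lemma above_mono x a : above x a.+1 <= above x a.
Proof.
by case: (ltnP a hi) => h; rewrite ?(aboveS x h) ?leq_addl // !above_top // ltnW.
Qed.

Lemma eq_above x y a : (forall i, a <= i -> x i = y i) -> above x a = above y a.
Proof. by move=> h; apply: eq_big_nat => i /andP [/h ->]. Qed.

(* [D a] is the slack available at cell a.  A column is admissible from cell a0 on if
   at each cell a >= a0 the count [above x a] is at most [D a + 1], with equality
   exactly when a is black: the sparseness condition on a new column. *)
Variable D : nat -> nat.

Definition column_ok (a0 : nat) (x : nat -> bool) : Prop :=
  forall a, a0 <= a < hi ->
    (above x a <= D a + 1) && ((above x a == D a + 1) == x a).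

(* Reading the column bottom-up, each cell is black iff the count reaches its bound,
   so an admissible column is determined by its total count. *)
Lemma column_unique a0 x y : column_ok a0 x -> column_ok a0 y ->
  above x a0 = above y a0 -> forall a, a0 <= a < hi -> x a = y a.
Proof.
move=> okx oky top.
have bitE z a : column_ok a0 z -> a0 <= a < hi -> z a = (above z a == D a + 1).
  by move=> okz /okz /andP [_ /eqP].
have eq_above_k k : a0 + k <= hi -> above x (a0 + k) = above y (a0 + k).
  elim: k => [|k IH] hk; first by rewrite addn0.
  have lt : a0 + k < hi by lia.
  have h := IH (ltnW lt).
  have hb : x (a0 + k) = y (a0 + k) by rewrite (bitE x) ?(bitE y) ?h //; lia.
  by move: h; rewrite (aboveS x lt) (aboveS y lt) hb addnS => /addnI.
move=> a ha; rewrite (bitE x) ?(bitE y) //.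
have -> : a = a0 + (a - a0) by lia.
by rewrite eq_above_k //; lia.
Qed.

(* If the slack decreases by at most one per cell going up from [lo], admissible
   columns exist with every count allowed by [cap]. *)
Variable lo : nat.
Definition cap (a : nat) : nat := if a < hi then D a + 1 else 0.
Hypothesis D_step : forall a, lo <= a < hi -> D a <= cap a.+1.

(* Build the column downwards: cell a is black iff the count t reaches [D a + 1],
   and the cells above carry the remaining count. *)
Lemma column_exists a t : lo <= a <= hi -> t <= cap a ->
  exists x, [/\ column_ok a x, above x a = t & forall i, x i -> a <= i < hi].
Proof.
move=> ha; have [k hk] : exists k, a + k = hi by exists (hi - a); lia.
elim: k a t ha hk => [|k IH] a t ha hk ht.
  exists (fun _ => false); split=> [i||i //]; first by lia.
  rewrite above_top; last by lia.
  by move: ht; rewrite /cap; case: ltnP; lia.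
have lt : a < hi by lia.
have htD : t <= D a + 1 by rewrite /cap lt in ht.
set b := t == D a + 1.
have [x' [ok' top' supp']] : exists x', [/\ column_ok a.+1 x', above x' a.+1 = t - b
    & forall i, x' i -> a.+1 <= i < hi].
  apply: IH; [lia | by rewrite addSnnS |].
  by apply: leq_trans (D_step _); [rewrite /b; case: eqP; lia | lia].
pose x i := if i == a then b else x' i.
have same_above i : a < i -> above x i = above x' i.
  by move=> hi'; apply: eq_above => j hj; rewrite /x ifF //; apply/eqP; lia.
have top : above x a = t by rewrite aboveS // same_above // top' /x eqxx /b; case: eqP; lia.
exists x; split=> // [i /andP [hai hih]|i].
  case: (eqVneq i a) => [->|hia]; first by rewrite top htD /x eqxx /b eqxx.
  by rewrite same_above ?/x ?(negbTE hia) ?ok' //; lia.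
by rewrite /x; case: eqP => [->|_ /supp']; lia.
Qed.
End Column.

Lemma eq_column_ok hi D1 D2 a0 x : D1 =1 D2 ->
  column_ok hi D1 a0 x -> column_ok hi D2 a0 x.
Proof. by move=> eD ok a /ok; rewrite eD. Qed.

Section Triangle.
Variable g : nat -> nat -> bool.

Definition col_count (a j : nat) : nat := above j.-1 (g^~ j) a.

Definition tri_count (a b : nat) : nat := \sum_(0 <= j < b.+1) col_count a j.

Lemma tri_countS a b : tri_count a b.+1 = tri_count a b + col_count a b.+1.
Proof. by rewrite /tri_count big_nat_recr. Qed.

Lemma tri_count_mono a b : tri_count a.+1 b <= tri_count a b.
Proof. by apply: leq_sum => j _; apply: above_mono. Qed.

Lemma tri_count_short a b : b <= a.+1 -> tri_count a b = 0.
Proof.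
move=> hb; rewrite /tri_count big_nat_cond big1 // => j /andP [/andP [_ hj] _].
by rewrite /col_count above_top //; lia.
Qed.

Definition sparse_at (a b : nat) : bool :=
  (tri_count a b <= b - a - 1) && ((tri_count a b == b - a - 1) == g a b).

Definition sparse_rel (e : nat) : Prop :=
  (forall i j, g i j -> in_tri 2 e.-1 i j) /\
  (forall a b, in_tri 2 e.-1 a b -> sparse_at a b).

(* Sub-triangles △_{a,b} with a >= 2 have at most b - a - 1 black dots (condition at
   their vertex, or emptiness when the height is zero). *)
Lemma sparse_rel_bound e a b : sparse_rel e -> 2 <= a -> b <= e.-1 ->
  tri_count a b <= b - a - 1.
Proof.
move=> [_ sp] ha hb; case: (leqP a.+2 b) => h; last by rewrite tri_count_short //; lia.
by have /andP [] : sparse_at a b by apply: sp; rewrite /in_tri; lia.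
Qed.
End Triangle.

Lemma eq_tri_count g1 g2 a b : (forall i j, j <= b -> g1 i j = g2 i j) ->
  tri_count g1 a b = tri_count g2 a b.
Proof.
move=> h; apply: eq_big_nat => j /andP [_ hj]; apply: eq_above => i _.
by rewrite h.
Qed.

Lemma eq_sparse_at g1 g2 a b : (forall i j, j <= b -> g1 i j = g2 i j) ->
  sparse_at g1 a b = sparse_at g2 a b.
Proof. by move=> h; rewrite /sparse_at (eq_tri_count _ h) h. Qed.

Lemma eq_sparse_rel g1 g2 e : g1 =2 g2 -> sparse_rel g1 e -> sparse_rel g2 e.
Proof.
move=> h [supp sp]; split=> [i j|a b /sp]; first by rewrite -h; apply: supp.
by rewrite (eq_sparse_at a (fun i j _ => h i j)).
Qed.

(* A sum over an interval [m, n) as a sum over a larger range [0, K) with an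
   indicator, so that nested interval sums can be exchanged. *)
Lemma sum_nat_indicator m n K (F : nat -> nat) : n <= K ->
  \sum_(m <= i < n) F i = \sum_(0 <= i < K) ((m <= i < n) * F i).
Proof.
move=> hK; rewrite (@big_nat_widenl _ _ _ m 0) // (@big_nat_widen _ _ _ 0 n K) //.
by rewrite big_mkcond; apply: eq_bigr => i _; rewrite andTb; case: ifP; rewrite ?mul1n.
Qed.

Definition black e (c : colouring e) (i j : nat) : bool :=
  if insub i is Some i' then (if insub j is Some j' then c (i', j') else false) else false.

Lemma black_ord e (c : colouring e) (i j : 'I_e) : black c i j = c (i, j).
Proof. by rewrite /black !valK. Qed.

Lemma black_ffun e (g : nat -> nat -> bool) i j :
  black [ffun p : 'I_e * 'I_e => g p.1 p.2] i j = (i < e) && (j < e) && g i j.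
Proof.
rewrite /black; case: insubP => [i' -> <-|/negbTE ->] //.
by case: insubP => [j' -> <-|/negbTE ->]; rewrite ?ffunE ?andbF.
Qed.

Lemma black_out e (c : colouring e) i j : black c i j -> (i < e) && (j < e).
Proof. by rewrite /black; do 2!case: insubP => // ? -> _. Qed.

Lemma nblack_tri_count e (c : colouring e) a b : b < e ->
  nblack c a b = tri_count (black c) a b.
Proof.
move=> hb; rewrite /nblack -sum1_card big_mkcond /=.
transitivity (\sum_(0 <= i < e) \sum_(0 <= j < e) (in_tri a b i j && black c i j : nat)).
  rewrite big_mkord; under [RHS]eq_bigr => i _ do rewrite big_mkord.
  by rewrite pair_big /=; apply: eq_bigr => -[i j] _; rewrite inE black_ord; case: (_ && _).
rewrite /tri_count (sum_nat_indicator 0 _ hb).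
rewrite [RHS](eq_big_nat _ _ (F2 := fun j => \sum_(0 <= i < e)
    (j < b.+1) * ((a <= i < j.-1) * black c i j))); last first.
  move=> j /andP [_ hj].
  rewrite /col_count /above (sum_nat_indicator a _ (n := j.-1) (K := e)).
    by rewrite big_distrr.
  by lia.
rewrite exchange_big_nat; apply: eq_big_nat => j _; apply: eq_big_nat => i _.
rewrite !mulnb /in_tri; case: (black c i j); rewrite ?andbT ?andbF //.
by congr (nat_of_bool _); apply/idP/idP; lia.
Qed.

Lemma sparse_colouringE e (c : colouring e) :
  supported c && sparse c <-> sparse_rel (black c) e.
Proof.
have in_e a b : in_tri 2 e.-1 a b -> (a < e) * (b < e) by rewrite /in_tri; split; lia.
split.
- case/andP => /forallP supp /forallP sp; split.
    move=> i j hc; have /andP [hi hj] := black_out hc.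
    by have := supp (Ordinal hi, Ordinal hj); rewrite /= -black_ord /= hc; case: in_tri.
  move=> a b ht; have := sp (Ordinal (in_e _ _ ht).1, Ordinal (in_e _ _ ht).2).
  by rewrite /= ht nblack_tri_count ?(in_e _ _ ht) // -black_ord.
- case=> supp sp; apply/andP; split; apply/forallP => -[x y]; apply/implyP => /=.
    by apply: contra => hc; apply: supp; rewrite black_ord.
  by move=> ht; rewrite nblack_tri_count ?(in_e _ _ ht) // -black_ord; exact: sp.
Qed.

Section NewColumn.
Variable f : nat.

Definition slack (g : nat -> nat -> bool) (a : nat) : nat := (f - a - 1) - tri_count g a f.

Definition extend (g : nat -> nat -> bool) (x : nat -> bool) (i j : nat) : bool :=
  if j == f.+1 then x i else g i j.

Lemma sparse_at_new_column g a : a < f -> tri_count g a f <= f - a - 1 ->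
  sparse_at g a f.+1 = (col_count g a f.+1 <= slack g a + 1) &&
                       ((col_count g a f.+1 == slack g a + 1) == g a f.+1).
Proof.
rewrite /sparse_at tri_countS /slack.
set N := tri_count g a f; set C := col_count g a f.+1 => af h.
have -> : (N + C <= f.+1 - a - 1) = (C <= f - a - 1 - N + 1) by apply/idP/idP; lia.
by have -> : (N + C == f.+1 - a - 1) = (C == f - a - 1 - N + 1) by apply/idP/idP; lia.
Qed.

Lemma slack_step g : sparse_rel g f.+1 ->
  forall a, 2 <= a < f -> slack g a <= cap f (slack g) a.+1.
Proof.
move=> sp a /andP [ha haf]; rewrite /cap /slack; case: ltnP => h; last by lia.
have := tri_count_mono g a f; have := sparse_rel_bound (a := a.+1) sp; lia.
Qed.

Lemma top_column_ok g : sparse_rel g f.+2 -> column_ok f (slack g) 2 (g^~ f.+1).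
Proof.
move=> sp a /andP [ha haf]; have := sparse_at_new_column haf.
rewrite /col_count /= => <-; last exact: sparse_rel_bound sp ha _.
by apply: (proj2 sp); rewrite /in_tri; lia.
Qed.

Lemma extend_sparse g x : sparse_rel g f.+1 -> column_ok f (slack g) 2 x ->
  (forall i, x i -> 2 <= i < f) -> sparse_rel (extend g x) f.+2.
Proof.
move=> [supp sp] ok xsupp.
have low i j : j <= f -> extend g x i j = g i j by move=> hj; rewrite /extend ifN_eq //; lia.
have tri_low a b : b <= f -> tri_count (extend g x) a b = tri_count g a b.
  by move=> hb; apply: eq_tri_count => i j hj; apply: low; lia.
split=> [i j|a b ht].
  by rewrite /extend; case: eqP => [->/xsupp|_ /supp]; rewrite /in_tri; lia.
case: (leqP b f) => hb.
  rewrite (eq_sparse_at a (fun i j hj => low i j (leq_trans hj hb))).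
  by apply: sp; move: ht; rewrite /in_tri; lia.
have -> : b = f.+1 by move: ht; rewrite /in_tri; lia.
have /andP [ha haf] : 2 <= a < f by move: ht; rewrite /in_tri; lia.
rewrite sparse_at_new_column //; last first.
  by rewrite tri_low //; exact: sparse_rel_bound (conj supp sp) ha _.
have -> : slack (extend g x) a = slack g a by rewrite /slack tri_low.
have -> : col_count (extend g x) a f.+1 = above f x a.
  by apply: eq_above => i _; rewrite /extend eqxx.
by rewrite /extend eqxx; apply: ok; rewrite ha.
Qed.
End NewColumn.

Definition restr e (c : colouring e.+1) : colouring e :=
  [ffun p : 'I_e * 'I_e => black c p.1 p.2].

Definition weight e (c : colouring e) : nat := tri_count (black c) 2 e.-1.

Section Restriction.
Variable f : nat.

Lemma black_restr (c : colouring f.+2) : sparse_rel (black c) f.+2 ->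
  forall i j, black (restr c) i j = (j <= f) && black c i j.
Proof.
move=> [supp _] i j; rewrite black_ffun.
case: (boolP (black c i j)) => [/supp|]; rewrite ?andbF // /in_tri => h.
by apply/idP/idP; lia.
Qed.

Lemma restr_sparse (c : colouring f.+2) :
  sparse_rel (black c) f.+2 -> sparse_rel (black (restr c)) f.+1.
Proof.
move=> sp; have [supp sps] := sp; split=> [i j|a b ht].
  by rewrite black_restr // => /andP [hj /supp]; rewrite /in_tri; lia.
have hb : b <= f by move: ht; rewrite /in_tri; lia.
rewrite (@eq_sparse_at _ (black c) a b) => [|i j hj]; last first.
  by rewrite black_restr // (leq_trans hj).
by apply: sps; move: ht; rewrite /in_tri; lia.
Qed.

Lemma weight_restr (c : colouring f.+2) : sparse_rel (black c) f.+2 ->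
  weight c = weight (restr c) + col_count (black c) 2 f.+1.
Proof.
move=> sp; rewrite /weight /= tri_countS; congr (_ + _).
by apply: eq_tri_count => i j hj; rewrite black_restr // hj.
Qed.

Lemma restr_inj (c1 c2 : colouring f.+2) :
  sparse_rel (black c1) f.+2 -> sparse_rel (black c2) f.+2 ->
  restr c1 = restr c2 -> weight c1 = weight c2 -> c1 = c2.
Proof.
move=> sp1 sp2 eqr eqw.
have low i j : j <= f -> black c1 i j = black c2 i j.
  by move=> hj; have := black_restr sp1 i j; rewrite eqr black_restr // hj.
have low_tri a b : b <= f -> tri_count (black c1) a b = tri_count (black c2) a b.
  by move=> hb; apply: eq_tri_count => i j hj; apply: low; apply: leq_trans hb.
have ok2 : column_ok f (slack f (black c1)) 2 (black c2 ^~ f.+1).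
  by apply: eq_column_ok (top_column_ok sp2) => a; rewrite /slack low_tri.
have top := column_unique (top_column_ok sp1) ok2.
have {}top a : 2 <= a < f -> black c1 a f.+1 = black c2 a f.+1.
  by apply: top; move: eqw; rewrite (weight_restr sp1) (weight_restr sp2) eqr => /addnI.
apply/ffunP => -[x y]; rewrite -!black_ord.
case: (leqP y f) => [/low //|hy]; case: (boolP ((y == f.+1 :> nat) && (2 <= x < f))).
  by case/andP => /eqP -> /top.
move=> out; have off c : sparse_rel (black c) f.+2 -> black c x y = false.
  by case=> supp _; apply/negP => /supp; rewrite /in_tri; lia.
by rewrite !off.
Qed.

Lemma restr_onto (c : colouring f.+1) m : 3 <= f -> sparse_rel (black c) f.+1 ->
  weight c <= m <= f - 2 ->
  exists c' : colouring f.+2, [/\ sparse_rel (black c') f.+2, restr c' = c & weight c' = m].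
Proof.
move=> hf sp /andP [hlo hhi].
have [x [ok top supp]] : exists x, [/\ column_ok f (slack f (black c)) 2 x,
    above f x 2 = m - weight c & forall i, x i -> 2 <= i < f].
  apply: (column_exists (slack_step sp)); first by lia.
  have := sparse_rel_bound sp (leqnn 2) (leqnn f).
  by rewrite /cap /slack /weight /= ifT //; lia.
pose c' := [ffun p : 'I_f.+2 * 'I_f.+2 => extend f (black c) x p.1 p.2].
have ext_sp := extend_sparse sp ok supp.
have black_c' : black c' =2 extend f (black c) x.
  move=> i j; rewrite black_ffun; case: (boolP (extend f _ x i j)); rewrite ?andbF //.
  by move/(proj1 ext_sp); rewrite /in_tri => h; apply/andP; lia.
exists c'; split.
- by apply: eq_sparse_rel ext_sp => i j; rewrite black_c'.
- apply/ffunP => -[i j]; rewrite !ffunE /= black_c' -black_ord /extend ifN_eq //.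
  by apply/eqP; have := ltn_ord j; lia.
- rewrite /weight /= (eq_tri_count 2 (fun i j _ => black_c' i j)) tri_countS.
  rewrite (@eq_tri_count _ (black c)) => [|i j hj]; last first.
    by rewrite /extend ifN_eq //; lia.
  rewrite [col_count _ _ _](eq_above _ (y := x)) ?top => [|i _]; last first.
    by rewrite /extend eqxx.
  by move: hlo; rewrite /weight /=; lia.
Qed.
End Restriction.

Lemma card_weight_step f m : 3 <= f -> m <= f - 2 ->
  #|[set c : colouring f.+2 | supported c && sparse c && (weight c == m)]| =
  #|[set c : colouring f.+1 | supported c && sparse c && (weight c <= m)]|.
Proof.
move=> hf hm; set A := [set c : colouring f.+2 | _].
have inj : {in A &, injective (@restr f.+1)}.
  move=> c1 c2; rewrite !inE => /andP [/sparse_colouringE sp1 /eqP w1].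
  move=> /andP [/sparse_colouringE sp2 /eqP w2] /restr_inj; apply=> //.
  by rewrite w1 w2.
rewrite -(card_in_imset inj); apply: eq_card => c; rewrite inE; apply/imsetP/idP.
  case=> c' + ->; rewrite inE => /andP [/sparse_colouringE sp /eqP <-].
  apply/andP; split; first by apply/sparse_colouringE; apply: restr_sparse.
  by rewrite (weight_restr sp) leq_addr.
case/andP => /sparse_colouringE sp hlo.
have [c' [sp' <- wc']] := restr_onto hf sp (introT andP (conj hlo hm)).
by exists c' => //; rewrite inE wc' eqxx andbT; apply/sparse_colouringE.
Qed.

Lemma card_le_sum (T : finType) (P : pred T) (F : T -> nat) m :
  #|[set x | P x && (F x <= m)]| = \sum_(j < m.+1) #|[set x | P x && (F x == j)]|.
Proof.
elim: m => [|m IH]; first by rewrite big_ord1; apply: eq_card => x; rewrite !inE leqn0.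
rewrite big_ord_recr /= -IH.
have -> : [set x | P x && (F x <= m.+1)] =
    [set x | P x && (F x <= m)] :|: [set x | P x && (F x == m.+1)].
  by apply/setP => x; rewrite !inE leq_eqVlt ltnS orbC andb_orr.
rewrite cardsU (_ : _ :&: _ = set0) ?cards0 ?subn0 //.
by apply/setP => x; rewrite !inE; case: (P x) => //=; apply/negP; lia.
Qed.

(* The vertex condition: a sparse colouring of △_{2,n+3} has at most n black dots. *)
Lemma weight_bound n (c : colouring n.+4) : supported c && sparse c -> weight c <= n.
Proof.
move/sparse_colouringE => sp.
by have := sparse_rel_bound sp (leqnn 2) (leqnn _); rewrite /weight; lia.
Qed.

(* Ballot numbers, given by the recursion satisfied by the counts by weight. *)
Fixpoint ballot (n k : nat) : nat :=
  if n is n'.+1 then (if k <= n then \sum_(j < k.+1) ballot n' j else 0) else (k == 0).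

Lemma ballot_gt n k : n < k -> ballot n k = 0.
Proof. by case: n => [|n] h /=; [case: k h | rewrite leqNgt h]. Qed.

Lemma ballot_sum n m : m <= n.+1 -> ballot n.+1 m = \sum_(j < m.+1) ballot n j.
Proof. by move=> hm /=; rewrite hm. Qed.

(* △_{2,3} is empty: the only sparse colouring of size 4 is all white. *)
Lemma sparse_colourings_4 (c : colouring 4) :
  supported c && sparse c = (c == [ffun => false]).
Proof.
have empty (x : 'I_4 * 'I_4) : in_tri 2 3 x.1 x.2 = false by rewrite /in_tri; lia.
apply/idP/eqP => [/andP [/forallP supp _]|->].
  by apply/ffunP => x; rewrite ffunE; apply/negbTE; have := supp x; rewrite empty.
by apply/andP; split; apply/forallP => x; rewrite /= empty ?ffunE.
Qed.

Lemma count_by_weight n m :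
  #|[set c : colouring n.+4 | supported c && sparse c && (weight c == m)]| = ballot n m.
Proof.
elim: n m => [|n IH] m.
  have -> : [set c : colouring 4 | supported c && sparse c && (weight c == m)] =
      [set c | (c == [ffun => false]) && (m == 0)].
    apply/setP => c; rewrite !inE sparse_colourings_4 /weight tri_count_short //.
    by rewrite [0 == m]eq_sym.
  case: m => [|m]; last by apply: eq_card0 => c; rewrite inE andbF.
  transitivity #|[set ([ffun => false] : colouring 4)]|; last by rewrite cards1.
  by apply: eq_card => c; rewrite !inE andbT.
case: (leqP m n.+1) => hm.
  rewrite card_weight_step // (card_le_sum (fun c => supported c && sparse c) (@weight _)).
  by rewrite ballot_sum //; apply: eq_bigr => j _; apply: IH.
rewrite ballot_gt //; apply: eq_card0 => c; rewrite inE.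
by apply/negP => /andP [/weight_bound hw /eqP hwm]; lia.
Qed.

(* 'C(N, k - 1), taken to be 0 when k = 0. *)
Definition bin_pred (N k : nat) : nat := if k is k'.+1 then 'C(N, k') else 0.

Lemma bin_pred_pascal N k : 'C(N.+1, k) = 'C(N, k) + bin_pred N k.
Proof. by case: k => [|k]; rewrite ?bin0 ?addn0 // binS. Qed.

Lemma ballot_pascal n k : k < n.+1 -> ballot n.+1 k.+1 = ballot n.+1 k + ballot n k.+1.
Proof. by move=> hk; rewrite !ballot_sum ?big_ord_recr //= ltnW. Qed.

Lemma ballot_closed n k : k <= n.+1 -> ballot n k + bin_pred (n + k) k = 'C(n + k, k).
Proof.
elim: n k => [|n IHn] k hk; first by case: k hk => [|[|k]].
elim: k hk => [|k IHk] hk.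
  by have := IHn 0 isT; rewrite ballot_sum // big_ord1 !bin0.
case: (eqVneq k n.+1) => [->|hkn].
  rewrite ballot_gt // add0n /= -(bin_sub (leq_addl n.+1 n.+2)).
  by congr 'C(_, _); lia.
have hk' : k < n.+1 by lia.
have h1 := IHk (ltnW hk); have h2 := IHn k.+1 hk'; rewrite addSnnS in h1; rewrite /= in h2.
rewrite ballot_pascal // addSn binS -[bin_pred _ k.+1]/('C((n + k.+1).+1, k)).
by rewrite (bin_pred_pascal (n + k.+1) k); lia.
Qed.

Lemma catalan_ballot n : 'C(n.+1.*2, n.+1) = n.+2 * ballot n.+1 n.+1.
Proof.
have := ballot_closed (leqnSn n.+1); have := mul_bin_left (n.+1 + n.+1) n.
rewrite -addnn /= (_ : n.+1 + n.+1 - n = n.+2); last by lia.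
by nia.
Qed.

Theorem mainTheorem2 (e : nat) (he : 4 <= e) :
  #|[set c : colouring e | supported c && sparse c]| =
  'C((e - 3).*2, e - 3) %/ (e - 2).
Proof.
have [n ->] : exists n, e = n.+4 by exists (e - 4); lia.
have -> : n.+4 - 3 = n.+1 by lia.
have -> : n.+4 - 2 = n.+2 by lia.
transitivity #|[set c : colouring n.+4 | supported c && sparse c && (weight c <= n)]|.
  by apply: eq_card => c; rewrite !inE; case: (boolP (_ && _)) => // /weight_bound ->.
rewrite card_le_sum catalan_ballot mulKn // ballot_sum // [RHS]big_ord_recr /=.
rewrite ballot_gt // addn0.
by apply: eq_bigr => j _; rewrite count_by_weight.
Qed.
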